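(* Let $r,d\ge 1$ be integers, $N=d2^r$, and let $F_1,F_2,\dots,F_{\binom{N}{d}}$ enumerate the $d$-element subsets of $[N]$. For $i\in[\binom{N}{d}]$ and $j\in[dr]$, let $\beta(i,j)$ be the $j$-th bit of the $dr$-bit binary representation of $i$ if $i\le 2^{dr}$, and $\beta(i,j)=\star$ otherwise. Define the partial concept class $\mathbb{H}_{r,d}=\{h_{i,j}\}$ on $[d(2^r+r)]$ by $h_{i,j}(x)=1$ if $x\in F_i$, $h_{i,j}(x)=0$ if $x\in[N]\setminus F_i$, $h_{i,j}(N+j)=\beta(i,j)$, and $h_{i,j}(x)=\star$ for all other $x$. Then $d\le\mathrm{LD}(\mathbb{H}_{r,d})\le d+1$, and the SOA disambiguation of $\mathbb{H}_{r,d}$ (with respect to the natural ordering of $[d(2^r+r)]$) shatters the set $\{N+1,\dots,N+dr\}$; in particular its VC dimension is at least $dr$.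
   Context: Littlestone dimension, VC dimension and shattering of a partial class $\mathbb{H}\subseteq\{0,1,\star\}^{[n]}$ are as usual (a set/tree is shattered if every $0/1$ pattern/leaf is realized by some concept taking the required $0/1$ values), with $\mathrm{LD}(\emptyset)=-1$. For $\vec b\in\{0,1,\star\}^k$, $\mathbb{H}|_{\vec b}=\{h\in\mathbb{H}:h(i)=b_i\ \forall i\in[k]\}$. The SOA disambiguation is produced iteratively: for $k=1,\dots,n$, given the current class (values at $1,\dots,k-1$ already in $\{0,1\}$), for every $\vec b\in\{0,1\}^{k-1}$ choose $c\in\{0,1\}$ maximizing $\mathrm{LD}(\mathbb{H}|_{\vec b c})$ (ties broken toward $c=0$) and set $h(k):=c$ for every $h\in\mathbb{H}|_{\vec b\star}$; the final total class is the SOA disambiguation. *)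

From mathcomp Require Import all_boot all_order all_algebra.
Set Implicit Arguments. Unset Strict Implicit. Unset Printing Implicit Defensive.
Import Order.TTheory GRing.Theory Num.Theory.

(* Partial concepts on the domain [n], represented 0-indexed as 'I_n.
   Values {0,1,*} are option bool: Some false = 0, Some true = 1, None = star. *)
Definition pconcept (n : nat) := {ffun 'I_n -> option bool}.

Definition restr n (H : {set pconcept n}) (x : 'I_n) (b : bool) : {set pconcept n} :=
  [set h in H | h x == Some b].

(* lde H k <=> H shatters a complete mistake tree of depth k:
   depth 0: the single leaf (empty path) is realized, i.e. H is nonempty;
   depth k+1: some root label x such that both subtrees (edges x->0, x->1)
   are shattered by the corresponding restrictions of H. *)
Fixpoint lde n (H : {set pconcept n}) (k : nat) : bool :=
  match k with
  | 0 => H != set0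
  | k'.+1 => [exists x : 'I_n, lde (restr H x false) k' && lde (restr H x true) k']
  end.

(* Littlestone dimension, with LD(empty) = -1.  The max ranges over k <= n,
   which is no restriction: along any path of a shattered tree the labels are
   distinct, so shattered trees have depth <= n. *)
Definition LD n (H : {set pconcept n}) : int :=
  if H == set0 then (-1)%R else Posz (\max_(k < n.+1 | lde H k) k).

Definition shatters n (H : {set pconcept n}) (S : {set 'I_n}) : bool :=
  [forall f : {ffun 'I_n -> bool}, exists h in H, forall x in S, h x == Some (f x)].

Definition VCdim n (H : {set pconcept n}) : nat :=
  \max_(S : {set 'I_n} | shatters H S) #|S|.

(* H|_{b c} at step k, where b is the prefix of h on positions < k. *)
Definition soa_restr n (H : {set pconcept n}) (k : 'I_n) (h : pconcept n) (c : bool)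
  : {set pconcept n} :=
  [set g in H | [forall i : 'I_n, (i < k) ==> (g i == h i)] && (g k == Some c)].

(* choose c maximizing LD(H|_{b c}), ties broken toward c = 0 *)
Definition soa_choice n (H : {set pconcept n}) (k : 'I_n) (h : pconcept n) : bool :=
  (LD (soa_restr H k h false) < LD (soa_restr H k h true))%R.

Definition soa_upd n (H : {set pconcept n}) (k : 'I_n) (h : pconcept n) : pconcept n :=
  if h k is None then [ffun x => if x == k then Some (soa_choice H k h) else h x]
  else h.

Definition soa_step n (k : 'I_n) (H : {set pconcept n}) : {set pconcept n} :=
  [set soa_upd H k h | h in H].

Definition SOA n (H : {set pconcept n}) : {set pconcept n} :=
  foldl (fun H' k => soa_step k H') H (enum 'I_n).

(* i is 0-indexed (paper's i = our i + 1); bit j (0-indexed, least significant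
   first) of the dr-bit representation of i, or star if i >= 2^(dr). *)
Definition beta (d r i j : nat) : option bool :=
  if i < 2 ^ (d * r) then Some (odd (i %/ 2 ^ j)) else None.

(* domain 'I_(d*(2^r+r)); points x < N = d*2^r form [N]; point N + j is the
   paper's point N + (j+1). *)
Definition hij (r d : nat) (F : 'I_('C(d * 2 ^ r, d)) -> {set 'I_(d * 2 ^ r)})
  (i : 'I_('C(d * 2 ^ r, d))) (j : 'I_(d * r)) : pconcept (d * (2 ^ r + r)) :=
  [ffun x : 'I_(d * (2 ^ r + r)) =>
     if val x < d * 2 ^ r then Some [exists y in F i, val y == val x]
     else if val x == d * 2 ^ r + val j then beta d r i j else None].

Definition Hclass (r d : nat) (F : 'I_('C(d * 2 ^ r, d)) -> {set 'I_(d * 2 ^ r)})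
  : {set pconcept (d * (2 ^ r + r))} :=
  [set hij F i j | i : 'I_('C(d * 2 ^ r, d)), j : 'I_(d * r)].

From mathcomp Require Import all_boot all_order all_algebra.
From mathcomp Require Import zify.
Import Order.TTheory GRing.Theory Num.Theory.
Set Implicit Arguments. Unset Strict Implicit. Unset Printing Implicit Defensive.

(* Following the 1-branch of a shattered tree of depth k
   yields a concept with at least k ones; every h_{i,j} has at most d + 1 ones
   (F_i and possibly N + j), so LD(H) <= d + 1.  Conversely the concepts that
   are 1 on A and 0 on B (A, B disjoint in [N]) shatter the tree querying
   fresh points of [N] while |A| <= d and |B| <= N - d; with A = B = {} this
   gives a tree of depth d, because every d-subset of [N] is some F_i.

   By induction on the steps, every concept after step m descends from
   some h_{i,j} (unchanged on [N] and beyond m), every h_{i,j} keeps a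
   descendant, and descendants of h_{i,j} with i < 2^(dr) carry the bits of i
   on the bit positions already treated.  At a bit position N + j', the prefix
   on [N] determines i (F is injective), so only bit j' of i keeps the
   restricted class nonempty and SOA must choose it.  Since 2^(dr) <= C(N,d),
   every bit pattern is the expansion of an admissible index. *)

Lemma disjoint_setU1r (T : finType) (A B : {set T}) x :
  x \notin A -> [disjoint A & B] -> [disjoint A & x |: B].
Proof.
rewrite !disjoints_subset => xA /subsetP AB; apply/subsetP => y yA.
rewrite !inE negb_or -in_setC (AB y yA) andbT.
by apply: contraNneq xA => <-.
Qed.

Section Littlestone.
Variable n : nat.
Implicit Types (H G : {set pconcept n}) (h : pconcept n) (k : nat).

Lemma restr_set0 (x : 'I_n) b : restr (set0 : {set pconcept n}) x b = set0.
Proof. by apply/setP => h; rewrite !inE. Qed.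

Lemma lde_set0 k : lde (set0 : {set pconcept n}) k = false.
Proof.
elim: k => [|k IH] /=; first by rewrite eqxx.
by apply/existsP => -[x]; rewrite !restr_set0 IH.
Qed.

Lemma restr_mono G H x b : G \subset H -> restr G x b \subset restr H x b.
Proof.
move=> sGH; apply/subsetP => h; rewrite !inE => /andP [hG ->].
by rewrite (subsetP sGH).
Qed.

Lemma lde_mono k G H : G \subset H -> lde G k -> lde H k.
Proof.
elim: k G H => [|k IH] G H sGH /=.
  by move=> /set0Pn [h hG]; apply/set0Pn; exists h; apply: (subsetP sGH).
move=> /existsP [x /andP [h0 h1]]; apply/existsP; exists x.
by rewrite (IH _ _ (restr_mono _ _ sGH) h0) (IH _ _ (restr_mono _ _ sGH) h1).
Qed.

Definition ones h : {set 'I_n} := [set x | h x == Some true].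

(* Following the all-ones branch of a shattered tree of depth k in a class
   whose concepts are all 1 on A produces a concept with |A| + k ones. *)
Lemma lde_ones k H (A : {set 'I_n}) :
  lde H k -> {in H, forall h, {in A, forall x, h x = Some true}} ->
  exists2 h, h \in H & #|A| + k <= #|ones h|.
Proof.
elim: k H A => [|k IH] H A /=.
  move=> /set0Pn [h hH] onesA; exists h => //; rewrite addn0.
  by apply/subset_leq_card/subsetP => x xA; rewrite inE onesA.
move=> /existsP [x /andP [lde0 lde1]] onesA.
have xA : x \notin A.
  apply: contraFN (lde_set0 k) => xA; congr lde: lde0.
  by apply/setP => h; rewrite !inE; case: (boolP (h \in H)) => // /onesA ->.
have onesxA : {in restr H x true, forall h, {in x |: A, forall y, h y = Some true}}.
  move=> h; rewrite inE => /andP [hH /eqP hx] y; rewrite in_setU1.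
  by case/predU1P => [-> //| yA]; apply: onesA.
have [h hH] := IH _ _ lde1 onesxA; rewrite cardsU1 xA add1n -addSnnS => le.
by exists h => //; move: hH; rewrite inE => /andP [].
Qed.

Lemma LD_set0 : LD (set0 : {set pconcept n}) = (-1)%R.
Proof. by rewrite /LD eqxx. Qed.

Lemma LD_ge0 H : H != set0 -> (0 <= LD H)%R.
Proof. by move=> nzH; rewrite /LD (negbTE nzH). Qed.

Lemma LD_le_ones H c : {in H, forall h, #|ones h| <= c} -> (LD H <= Posz c)%R.
Proof.
move=> onesH; rewrite /LD; case: ifP => _ //; rewrite lez_nat.
apply/bigmax_leqP => k ldek.
have noA : {in H, forall h, {in set0, forall x : 'I_n, h x = Some true}}.
  by move=> h _ x; rewrite inE.
have [h hH] := lde_ones ldek noA.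
by rewrite cards0 add0n => /leq_trans; apply; apply: onesH.
Qed.

Lemma LD_ge_lde H k : k <= n -> lde H k -> (Posz k <= LD H)%R.
Proof.
move=> kn ldek; rewrite /LD; case: eqP => [H0|_].
  by rewrite H0 lde_set0 in ldek.
by rewrite lez_nat; apply: (@leq_bigmax_cond _ _ _ (Ordinal (kn : k < n.+1))).
Qed.

Lemma VCdim_ge H S : shatters H S -> #|S| <= VCdim H.
Proof. exact: (@leq_bigmax_cond _ (shatters H) (fun S => #|S|)). Qed.

Lemma soa_choice_forced H (k : 'I_n) h c :
  soa_restr H k h c != set0 -> soa_restr H k h (~~ c) = set0 ->
  soa_choice H k h = c.
Proof.
rewrite /soa_choice; case: c => /= nz e; rewrite e LD_set0.
  by apply: lt_le_trans (LD_ge0 nz).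
by apply/negbTE; rewrite -leNgt; apply: le_trans (LD_ge0 nz).
Qed.

End Littlestone.

Lemma bits_exist L (b : nat -> bool) :
  exists2 i, i < 2 ^ L & forall j, j < L -> odd (i %/ 2 ^ j) = b j.
Proof.
elim: L b => [|L IH] b; first by exists 0.
have [i iL bitsi] := IH (fun j => b j.+1).
exists (b 0 + i.*2); first by rewrite expnS; case: (b 0) => /=; lia.
case=> [|j] jL; first by rewrite divn1 oddD odd_double addbF; case: (b 0).
by rewrite expnS divnMA divn2 half_bit_double bitsi.
Qed.

(* There are at least 2^(d r) subsets of size d of a set of size d 2^r:
   compare the falling factorials (d 2^r)^_d >= d! 2^(r d) factor by factor. *)
Lemma binom_ge r d : 2 ^ (d * r) <= 'C(d * 2 ^ r, d).
Proof.
have ffact_ge t : t <= d -> d ^_ t * 2 ^ (r * t) <= (d * 2 ^ r) ^_ t.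
  elim: t => [|t IH] td; first by rewrite !ffactn0 muln0.
  have pos : 0 < 2 ^ r by rewrite expn_gt0.
  have factor : (d - t) * 2 ^ r <= d * 2 ^ r - t by rewrite mulnBl; nia.
  rewrite !ffactnSr mulnS expnD [2 ^ r * _]mulnC mulnACA.
  exact: leq_mul (IH (ltnW td)) factor.
have := ffact_ge d (leqnn d); rewrite ffactnn -bin_ffact mulnC [r * d]mulnC.
by rewrite leq_pmul2r ?fact_gt0.
Qed.

Section ClassHrd.
Variables r d : nat.
Variable F : 'I_('C(d * 2 ^ r, d)) -> {set 'I_(d * 2 ^ r)}.

Local Notation N := (d * 2 ^ r).
Local Notation n := (d * (2 ^ r + r)).

Lemma le_N_n : N <= n.
Proof. by rewrite leq_mul2l leq_addr orbT. Qed.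

Lemma lt_top (j : 'I_(d * r)) : N + j < n.
Proof. by rewrite mulnDr ltn_add2l ltn_ord. Qed.

Definition emb (y : 'I_N) : 'I_n := widen_ord le_N_n y.
Definition top (j : 'I_(d * r)) : 'I_n := Ordinal (lt_top j).

Lemma hij_emb i j y : hij F i j (emb y) = Some (y \in F i).
Proof.
rewrite ffunE /= ltn_ord; congr Some; apply/existsP/idP.
  by case=> z /andP [zF /eqP /val_inj <-].
by move=> yF; exists y; rewrite yF eqxx.
Qed.

Lemma hij_low i j j' (x : 'I_n) : val x < N -> hij F i j x = hij F i j' x.
Proof. by move=> xN; rewrite !ffunE xN. Qed.

Lemma hij_top i j (x : 'I_n) :
  N <= val x -> hij F i j x = if val x == N + j then beta d r i j else None.
Proof. by move=> Nx; rewrite ffunE ltnNge Nx. Qed.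

(* Upper bound: each h_{i,j} is 1 on F_i and possibly at N + j, hence has at
   most d + 1 ones, which bounds the depth of any shattered tree. *)
Lemma ones_hij (Fcard : forall i, #|F i| = d) i j : #|ones (hij F i j)| <= d + 1.
Proof.
have sub : ones (hij F i j) \subset top j |: emb @: F i.
  apply/subsetP => x; rewrite inE ffunE in_setU1 orbC.
  case: ifP => [xN | _].
    move=> /eqP [] /existsP [y /andP [yF /eqP yx]]; apply/orP; left.
    by apply/imsetP; exists y => //; apply: val_inj.
  case: ifP => [/eqP xj _ | //]; apply/orP; right; apply/eqP; exact: val_inj.
apply: leq_trans (subset_leq_card sub) _; rewrite cardsU1 addnC leq_add ?leq_b1 //.
by apply: leq_trans (leq_imset_card _ _) _; rewrite Fcard.
Qed.

Lemma LD_Hclass_le (Fcard : forall i, #|F i| = d) : (LD (Hclass F) <= Posz d + 1)%R.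
Proof. by apply: LD_le_ones => _ /imset2P [i j _ _ ->]; apply: ones_hij. Qed.

Definition fixed (A B : {set 'I_N}) : {set pconcept n} :=
  [set h in Hclass F | [forall y in A, h (emb y) == Some true] &&
                       [forall y in B, h (emb y) == Some false]].

Lemma fixed_restr0 (A B : {set 'I_N}) x :
  fixed A (x |: B) \subset restr (fixed A B) (emb x) false.
Proof.
apply/subsetP => h; rewrite !inE => /and3P [hH hA /forall_inP hxB].
rewrite hH hA hxB ?setU11 //= andbT.
by apply/forall_inP => y yB; rewrite hxB ?setU1r.
Qed.

Lemma fixed_restr1 (A B : {set 'I_N}) x :
  fixed (x |: A) B \subset restr (fixed A B) (emb x) true.
Proof.
apply/subsetP => h; rewrite !inE => /and3P [hH /forall_inP hxA hB].
rewrite hH hB hxA ?setU11 //= !andbT.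
by apply/forall_inP => y yA; rewrite hxA ?setU1r.
Qed.

Section LowerBound.
Hypothesis Fonto : forall S : {set 'I_N}, #|S| = d -> exists i, F i = S.
Variable j0 : 'I_(d * r).

Lemma fixed_nonempty (A B : {set 'I_N}) :
  [disjoint A & B] -> #|A| <= d -> #|B| <= N - d -> fixed A B != set0.
Proof.
move=> dAB cA cB; set U := ~: (A :|: B).
have dN : d <= N by rewrite leq_pmulr // expn_gt0.
have cU : d - #|A| <= #|U|.
  have := cardsC (A :|: B); rewrite card_ord -/U cardsU (disjoint_setI0 dAB) cards0; lia.
set T := [set x in take (d - #|A|) (enum U)].
have cT : #|T| = d - #|A|.
  rewrite cardsE (card_uniqP _) ?take_uniq ?enum_uniq //.
  by rewrite size_takel // -cardE.
have TU : T \subset U by apply/subsetP => x; rewrite inE => /mem_take; rewrite mem_enum.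
have dAT : [disjoint A & T].
  by apply: disjointWr TU _; rewrite disjoints_subset setCK subsetUl.
have [i Fi] : exists i, F i = A :|: T.
  by apply: Fonto; rewrite cardsU (disjoint_setI0 dAT) cards0 cT; lia.
apply/set0Pn; exists (hij F i j0); rewrite inE; apply/and3P; split.
- by apply/imset2P; exists i j0.
- by apply/forallP => y; apply/implyP => yA; rewrite hij_emb Fi in_setU yA.
apply/forallP => y; apply/implyP => yB; rewrite hij_emb Fi in_setU.
rewrite (disjointFl dAB yB) /=; apply/eqP; congr Some; apply/negbTE.
by apply: contraL yB => /(subsetP TU); rewrite !inE negb_or => /andP [_].
Qed.

(* The class fixed A B shatters the complete tree of depth m that queries
   fresh points of [N], as long as room remains for d ones and N - d zeros. *)
Lemma lde_fixed m (A B : {set 'I_N}) :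
  [disjoint A & B] -> #|A| + m <= d -> #|B| + m <= N - d -> lde (fixed A B) m.
Proof.
elim: m A B => [|m IH] A B dAB cA cB /=.
  by apply: fixed_nonempty; rewrite // -(addn0 #|_|).
have [x] : exists x, x \in ~: (A :|: B).
  apply/set0Pn; rewrite -card_gt0.
  by have := cardsC (A :|: B); rewrite card_ord cardsU; lia.
rewrite !inE negb_or => /andP [xA xB].
apply/existsP; exists (emb x); apply/andP; split.
  apply: lde_mono (fixed_restr0 A B x) (IH _ _ _ _ _) => //.
  - exact: disjoint_setU1r.
  - lia.
  - by rewrite cardsU1 xB; lia.
apply: lde_mono (fixed_restr1 A B x) (IH _ _ _ _ _) => //.
- by rewrite disjoint_sym disjoint_setU1r // disjoint_sym.
- by rewrite cardsU1 xA; lia.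
- lia.
Qed.

Lemma LD_Hclass_ge (hr : 1 <= r) : (Posz d <= LD (Hclass F))%R.
Proof.
have dN : d + d <= N.
  by rewrite addnn -mul2n mulnC leq_mul2l -{1}(expn1 2) leq_exp2l // hr orbT.
apply: LD_ge_lde; first by apply: leq_trans le_N_n; lia.
apply: lde_mono _ (lde_fixed (m := d) (A := set0) (B := set0) _ _ _) => //.
- by apply/subsetP => h; rewrite inE => /andP [].
- by rewrite -setI_eq0 set0I.
- by rewrite cards0.
- by rewrite cards0; lia.
Qed.

End LowerBound.

Definition descends m i j (g : pconcept n) : Prop :=
  [/\ forall x : 'I_n, m <= val x -> g x = hij F i j x,
      forall x : 'I_n, val x < N -> g x = hij F i j x &
      val i < 2 ^ (d * r) -> forall x : 'I_n, N <= val x -> val x < m ->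
        val x < N + d * r -> g x = Some (odd (val i %/ 2 ^ (val x - N)))].

Definition soa_inv m (G : {set pconcept n}) : Prop :=
  (forall g, g \in G -> exists i j, descends m i j g) /\
  (forall i j, exists2 g, g \in G & descends m i j g).

Lemma soa_inv0 : soa_inv 0 (Hclass F).
Proof.
split=> [g /imset2P [i j _ _ ->] | i j]; first by exists i, j.
by exists (hij F i j); [apply/imset2P; exists i j | split].
Qed.

Section SOASteps.
Hypothesis Finj : injective F.

Lemma same_index i j i' j' :
  (forall x : 'I_n, val x < N -> hij F i j x = hij F i' j' x) -> i = i'.
Proof.
move=> agree; apply: Finj; apply/setP => y.
by have := agree (emb y) (ltn_ord y); rewrite !hij_emb => -[].
Qed.

Variables (m : nat) (G : {set pconcept n}) (k : 'I_n).
Hypotheses (invG : soa_inv m G) (km : val k = m).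

(* At a bit position k = N + j', when h descends from h_{i,j} with i < 2^(dr),
   the prefix of h together with bit j' of i is realized by a descendant of
   h_{i,j'} ... *)
Lemma soa_restr_bit i j h :
  descends m i j h -> val i < 2 ^ (d * r) -> N <= m -> m < N + d * r ->
  soa_restr G k h (odd (val i %/ 2 ^ (m - N))) != set0.
Proof.
move=> [_ hN hbits] iL Nm mL; have jmL : m - N < d * r by lia.
have [g gG [gtop gN gbits]] := invG.2 i (Ordinal jmL).
apply/set0Pn; exists g; rewrite inE gG /=; apply/andP; split.
  apply/forallP => y; apply/implyP; rewrite km => ym.
  case: (ltnP (val y) N) => yN.
    by rewrite gN // hN // (hij_low _ _ j).
  have yL : val y < N + d * r := ltn_trans ym mL.
  by rewrite gbits ?hbits.
rewrite gtop ?km // hij_top ?km //= subnKC // eqxx /beta iL.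
by rewrite -[in odd _](subnKC Nm) addKn.
Qed.

(* ... while the opposite bit is realized by no concept of G: a concept g
   agreeing with h on [N] descends from h_{i,j''} for some j'', and at k the
   concept h_{i,j''} is either undefined or equal to bit j' of i. *)
Lemma soa_restr_notbit i j h :
  descends m i j h -> val i < 2 ^ (d * r) -> N <= m ->
  soa_restr G k h (~~ odd (val i %/ 2 ^ (m - N))) = set0.
Proof.
move=> [_ hN _] iL Nm; apply/setP => g; rewrite !inE.
apply/negbTE/negP => /andP [gG /andP [/forallP agree gk]].
have [i' [j' [gtop gN _]]] := invG.1 g gG.
have ii' : i = i'.
  apply: (same_index (j := j) (j' := j')) => x xN.
  rewrite -hN // -gN //; apply/esym/eqP.
  by apply: (implyP (agree x)); rewrite km; apply: leq_trans xN Nm.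
move: gk; rewrite gtop ?km // hij_top ?km // -ii'.
case: (m =P N + j') => [mj' | //]; rewrite /beta iL mj' addKn.
by case: (odd _).
Qed.

Lemma soa_choice_bit i j h :
  descends m i j h -> val i < 2 ^ (d * r) -> N <= m -> m < N + d * r ->
  soa_choice G k h = odd (val i %/ 2 ^ (m - N)).
Proof.
move=> hdesc iL Nm mL; apply: soa_choice_forced.
  exact: soa_restr_bit hdesc iL Nm mL.
exact: soa_restr_notbit hdesc iL Nm.
Qed.

(* One SOA step preserves descent: a defined value at k is already correct,
   and an undefined one is set to the bit of i by soa_choice_bit. *)
Lemma descends_step i j h :
  descends m i j h -> descends m.+1 i j (soa_upd G k h).
Proof.
move=> hdesc; have [htop hN hbits] := hdesc.
have xk (x : 'I_n) : (val x == m) = (x == k) by rewrite -km.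
rewrite /soa_upd; case hk: (h k) => [b|]; split.
- by move=> x xm; apply: htop; apply: ltnW.
- exact: hN.
- move=> iL x Nx; rewrite ltnS leq_eqVlt xk => /predU1P [xk' _ | ]; last exact: hbits.
  rewrite xk' in Nx *; rewrite hk.
  have := htop k; rewrite km leqnn hk => /(_ isT).
  rewrite hij_top // /beta iL km.
  by case: (m =P N + j) => // -> [->]; rewrite addKn.
- move=> x xm; rewrite ffunE -xk eqn_leq leqNgt xm /=; apply: htop; exact: ltnW.
- move=> x xN; rewrite ffunE -xk; case: eqP => [xm | _]; last exact: hN.
  have xkE : x = k by apply: val_inj; rewrite xm km.
  by move: hk; rewrite -xkE hN // ffunE xN.
- move=> iL x Nx xm xL; rewrite ffunE -xk; case: eqP => [xmE | xm']; last first.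
    by apply: hbits => //; rewrite ltn_neqAle -ltnS xm andbT; apply/eqP.
  by rewrite (soa_choice_bit hdesc) // -xmE.
Qed.

Lemma soa_inv_step : soa_inv m.+1 (soa_step k G).
Proof.
split=> [g /imsetP [h hG ->] | i j].
  by have [i [j hdesc]] := invG.1 h hG; exists i, j; apply: descends_step.
have [h hG hdesc] := invG.2 i j.
by exists (soa_upd G k h); [apply: imset_f | apply: descends_step].
Qed.

End SOASteps.

Lemma soa_inv_foldl (Finj : injective F) (s : seq 'I_n) m G :
  soa_inv m G -> map val s = iota m (size s) ->
  soa_inv (m + size s) (foldl (fun H' k => soa_step k H') G s).
Proof.
elim: s m G => [|k s IH] m G invG /=; first by rewrite addn0.
by case=> km sE; rewrite -addSnnS; apply: IH sE; apply: soa_inv_step.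
Qed.

Lemma soa_inv_SOA (Finj : injective F) : soa_inv n (SOA (Hclass F)).
Proof.
have := soa_inv_foldl Finj (s := enum 'I_n) soa_inv0.
by rewrite size_enum_ord val_enum_ord; apply.
Qed.

(* Every pattern on the dr bit positions is the bit pattern of some index
   i < 2^(dr) <= C(N, d), realized in SOA(H) by a descendant of h_{i,j}. *)
Lemma SOA_shatters_bits (Finj : injective F) (j0 : 'I_(d * r)) :
  shatters (SOA (Hclass F)) [set x : 'I_n | N <= val x < N + d * r].
Proof.
apply/forallP => f.
have [i0 i0L bitsi0] := bits_exist (d * r) (fun t => f (insubd (top j0) (N + t))).
set i : 'I_('C(N, d)) := Ordinal (leq_trans i0L (binom_ge r d)).
have [g gS [_ _ gbits]] := (soa_inv_SOA Finj).2 i j0.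
apply/existsP; exists g; rewrite gS /=; apply/forall_inP => x.
rewrite inE => /andP [Nx xL].
rewrite gbits ?ltn_ord //= bitsi0; last by rewrite ltn_subLR.
suff -> : insubd (top j0) (N + (val x - N)) = x by [].
by apply: val_inj; rewrite val_insubd subnKC // ltn_ord.
Qed.

Lemma card_bits : d * r <= #|[set x : 'I_n | N <= val x < N + d * r]|.
Proof.
have sub : top @: [set: 'I_(d * r)] \subset [set x : 'I_n | N <= val x < N + d * r].
  by apply/subsetP => _ /imsetP [j _ ->]; rewrite inE /= leq_addr ltn_add2l ltn_ord.
apply: leq_trans (subset_leq_card sub); rewrite card_imset ?cardsT ?card_ord //.
by move=> j j' /(congr1 val) /addnI /val_inj.
Qed.

End ClassHrd.

Unset Implicit Arguments.

Theorem mainTheorem5 (r d : nat) (hr : 1 <= r) (hd : 1 <= d)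
  (F : 'I_('C(d * 2 ^ r, d)) -> {set 'I_(d * 2 ^ r)})
  (Finj : injective F)
  (Fcard : forall i, #|F i| = d)
  (Fonto : forall S : {set 'I_(d * 2 ^ r)}, #|S| = d -> exists i, F i = S) :
  ((Posz d <= LD (Hclass F))%R /\ (LD (Hclass F) <= Posz d + 1)%R) /\
  shatters (SOA (Hclass F))
    [set x : 'I_(d * (2 ^ r + r)) | d * 2 ^ r <= val x < d * 2 ^ r + d * r] /\
  d * r <= VCdim (SOA (Hclass F)).
Proof.
have j0 : 'I_(d * r) by exists 0; rewrite muln_gt0 hd hr.
have shat := SOA_shatters_bits Finj j0.
split; first split.
- exact: LD_Hclass_ge Fonto j0 hr.
- exact: LD_Hclass_le Fcard.
split; first exact: shat.
exact: leq_trans (card_bits r d) (VCdim_ge shat).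
Qed.
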